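(* Let $\Theta=S\cup E\cup X$ be an action theory whose big model $M_{big}=\langle W_{big},R_{big}\rangle$ is a model of $\Theta$. Then for every PDL-model $M=\langle W,R\rangle$ with $M\models\Theta$ there is a minimal (with respect to set inclusion) $R'\subseteq R_{big}\setminus R$ such that $\langle \mathrm{val}(S),R\cup R'\rangle$ is a model of $\Theta$.
   Context: Fix a set $\mathrm{Act}$ of atomic actions and a set $\mathrm{Prop}$ of atoms. Boolean formulas are classical propositional formulas over $\mathrm{Prop}$; a valuation is a maximal consistent set of literals; $\mathrm{val}(S)$ is the set of valuations satisfying every formula of $S$. Modal formulas are built from Boolean formulas with the Boolean connectives and $[a]$ for $a\in\mathrm{Act}$; $\langle a\rangle\Phi:=\neg[a]\neg\Phi$. A PDL-model is $M=\langle W,R\rangle$, $W$ a set of valuations, $R$ assigning to each $a$ a relation $R_a\subseteq W\times W$ (relations are compared as sets of labelled pairs); truth at worlds is standard ($w\models p$ iff $p\in w$; $w\models[a]\Phi$ iff all $R_a$-successors satisfy $\Phi$), and $M\models\Theta$ iff every formula of $\Theta$ holds at every world. A static law is a Boolean formula; an effect law for $a$ is $\varphi\to[a]\psi$; an executability law for $a$ is $\varphi\to\langle a\rangle\top$ ($\varphi,\psi$ Boolean). An action theory is $\Theta=S\cup E\cup X$ (static, effect, executability laws); $E_a$ is the set of effect laws for $a$. The big model of $\Theta$ is $M_{big}=\langle W_{big},R_{big}\rangle$ with $W_{big}=\mathrm{val}(S)$ and $(R_{big})_a=\{(w,w')\in W_{big}^2:$ for all $\varphi\to[a]\psi\in E_a$,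 if $w\models\varphi$ then $w'\models\psi\}$. *)

Set Implicit Arguments.

Section Syntax.
Variables (Act Atom : Type).

Inductive bform : Type :=
| BAtom : Atom -> bform
| BTop : bform
| BBot : bform
| BNeg : bform -> bform
| BAnd : bform -> bform -> bform
| BOr : bform -> bform -> bform
| BImp : bform -> bform -> bform.

Inductive mform : Type :=
| MBool : bform -> mform
| MNeg : mform -> mform
| MAnd : mform -> mform -> mform
| MOr : mform -> mform -> mform
| MImp : mform -> mform -> mform
| MBox : Act -> mform -> mform.

Definition MDia (a : Act) (f : mform) : mform := MNeg (MBox a (MNeg f)).

(* A valuation (maximal consistent set of literals) is represented by
   the truth value it assigns to each atom. *)
Definition valuation := Atom -> bool.

Fixpoint beval (w : valuation) (f : bform) : bool :=
  match f with
  | BAtom p => w p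
  | BTop => true
  | BBot => false
  | BNeg g => negb (beval w g)
  | BAnd g h => andb (beval w g) (beval w h)
  | BOr g h => orb (beval w g) (beval w h)
  | BImp g h => orb (negb (beval w g)) (beval w h)
  end.

Definition worlds := valuation -> Prop.
Definition arel := Act -> valuation -> valuation -> Prop.

Fixpoint sat (R : arel) (w : valuation) (f : mform) : Prop :=
  match f with
  | MBool b => beval w b = true
  | MNeg g => ~ sat R w g
  | MAnd g h => sat R w g /\ sat R w h
  | MOr g h => sat R w g \/ sat R w h
  | MImp g h => sat R w g -> sat R w h
  | MBox a g => forall w', R a w w' -> sat R w' g
  end.

Definition is_frame (W : worlds) (R : arel) : Prop :=
  forall a w w', R a w w' -> W w /\ W w'.

Definition models (W : worlds) (R : arel) (T : mform -> Prop) : Prop :=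
  is_frame W R /\ (forall f, T f -> forall w, W w -> sat R w f).

(* Action theory Θ = S ∪ E ∪ X given by:
   S : set of static laws (Boolean formulas),
   E a φ ψ : "φ → [a]ψ" is an effect law of Θ,
   X a φ : "φ → <a>⊤" is an executability law of Θ. *)
Definition static_laws := bform -> Prop.
Definition effect_laws := Act -> bform -> bform -> Prop.
Definition exec_laws := Act -> bform -> Prop.

Definition theory (S : static_laws) (E : effect_laws) (X : exec_laws)
  : mform -> Prop :=
  fun f =>
    (exists phi, S phi /\ f = MBool phi)
    \/ (exists a phi psi, E a phi psi /\ f = MImp (MBool phi) (MBox a (MBool psi)))
    \/ (exists a phi, X a phi /\ f = MImp (MBool phi) (MDia a (MBool BTop))).

Definition valS (S : static_laws) : worlds :=
  fun w => forall phi, S phi -> beval w phi = true.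

Definition W_big (S : static_laws) : worlds := valS S.

Definition R_big (S : static_laws) (E : effect_laws) : arel :=
  fun a w w' => valS S w /\ valS S w' /\
    (forall phi psi, E a phi psi -> beval w phi = true -> beval w' psi = true).

Definition rel_sub (R1 R2 : arel) : Prop := forall a w w', R1 a w w' -> R2 a w w'.
Definition rel_union (R1 R2 : arel) : arel := fun a w w' => R1 a w w' \/ R2 a w w'.
Definition rel_diff (R1 R2 : arel) : arel := fun a w w' => R1 a w w' /\ ~ R2 a w w'.

End Syntax.

(* Call a world [w] of [val(S)] deficient for [a] when some executability law
   for [a] fires at [w] but [w] has no [R_a]-successor.  Since the big model
   satisfies the executability laws, each deficient world has an
   [(R_big)_a]-successor; choosing one such successor per deficient world gives
   [R'].  Adding it repairs the executability laws, and the effect laws survive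
   because [R'] lies inside [R_big].  It is minimal because every deficient
   world has exactly one [R']-successor, so any [R'' ⊆ R'] yielding a model
   must keep that successor. *)
From Stdlib Require Import Classical ClassicalEpsilon.

Set Implicit Arguments.

Section Theory.
Variables (Act Atom : Type).
Variables (S : static_laws Atom) (E : effect_laws Act Atom) (X : exec_laws Act Atom).

Definition statics_hold (W : worlds Atom) : Prop :=
  forall w, W w -> valS S w.

Definition effects_hold (W : worlds Atom) (R : arel Act Atom) : Prop :=
  forall a phi psi w w', E a phi psi -> W w -> beval w phi = true ->
    R a w w' -> beval w' psi = true.

Definition executabilities_hold (W : worlds Atom) (R : arel Act Atom) : Prop :=
  forall a phi w, X a phi -> W w -> beval w phi = true -> exists w', R a w w'.

Lemma models_theoryP (W : worlds Atom) (R : arel Act Atom) :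
  models W R (theory S E X) <->
  is_frame W R /\ statics_hold W /\ effects_hold W R /\ executabilities_hold W R.
Proof.
  split.
  - intros [HF HM]. split; [exact HF|]. split; [|split].
    + intros w Hw phi Hphi. apply (HM _ (or_introl (ex_intro _ phi (conj Hphi eq_refl))) w Hw).
    + intros a phi psi w w' He Hw Hphi.
      exact (HM _ (or_intror (or_introl
        (ex_intro _ a (ex_intro _ phi (ex_intro _ psi (conj He eq_refl)))))) w Hw Hphi w').
    + intros a phi w Hx Hw Hphi.
      assert (Hdia := HM _ (or_intror (or_intror
        (ex_intro _ a (ex_intro _ phi (conj Hx eq_refl))))) w Hw Hphi).
      simpl in Hdia. apply NNPP. intro Hnone.
      apply Hdia. intros w' Hw' _. apply Hnone. now exists w'.
  - intros [HF [HS [HE HX]]]. split; [exact HF|].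
    intros f Hf w Hw.
    destruct Hf as [[phi [Hphi ->]] | [[a [phi [psi [He ->]]]] | [a [phi [Hx ->]]]]]; simpl.
    + exact (HS w Hw phi Hphi).
    + intros Hphi w' Hw'. exact (HE a phi psi w w' He Hw Hphi Hw').
    + intros Hphi Hnone. destruct (HX a phi w Hx Hw Hphi) as [w' Hw'].
      exact (Hnone w' Hw' eq_refl).
Qed.

Definition deficient (R : arel Act Atom) (a : Act) (w : valuation Atom) : Prop :=
  valS S w /\ ~ (exists v, R a w v) /\ exists phi, X a phi /\ beval w phi = true.

Definition big_succ (a : Act) (w : valuation Atom) : valuation Atom :=
  epsilon (inhabits w) (R_big S E a w).

Definition completion (R : arel Act Atom) : arel Act Atom :=
  fun a w w' => deficient R a w /\ w' = big_succ a w.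

Hypothesis big_model : models (W_big S) (R_big S E) (theory S E X).

Lemma big_succP {R : arel Act Atom} {a w} :
  deficient R a w -> R_big S E a w (big_succ a w).
Proof.
  intros [Hw [_ [phi [Hx Hphi]]]].
  unfold big_succ. apply epsilon_spec.
  apply models_theoryP in big_model as (_ & _ & _ & HX).
  exact (HX a phi w Hx Hw Hphi).
Qed.

Lemma completion_sub_diff (R : arel Act Atom) :
  rel_sub (completion R) (rel_diff (R_big S E) R).
Proof.
  intros a w w' [Hdef ->]. split; [exact (big_succP Hdef)|].
  intro Hr. destruct Hdef as [_ [Hnone _]]. apply Hnone. eauto.
Qed.

Lemma completion_models (W : worlds Atom) (R : arel Act Atom) :
  models W R (theory S E X) ->
  models (valS S) (rel_union R (completion R)) (theory S E X).
Proof.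
  intros HM. apply models_theoryP in HM as (HF & HS & HE & _).
  apply models_theoryP. split; [|split; [|split]].
  - intros a w w' [Hr | [Hdef ->]].
    + destruct (HF a w w' Hr) as [Hw Hw']. split; auto.
    + destruct (big_succP Hdef) as (Hw & Hw' & _). auto.
  - intros w Hw. exact Hw.
  - intros a phi psi w w' He _ Hphi [Hr | [Hdef ->]].
    + exact (HE a phi psi w w' He (proj1 (HF a w w' Hr)) Hphi Hr).
    + destruct (big_succP Hdef) as (_ & _ & Heff). exact (Heff phi psi He Hphi).
  - intros a phi w Hx Hw Hphi.
    destruct (classic (exists v, R a w v)) as [[v Hv] | Hnone].
    + exists v. now left.
    + exists (big_succ a w). right. split; [|reflexivity].
      split; [exact Hw|]. split; [exact Hnone|]. eauto.
Qed.

(* Needs neither the big model nor [R'' ⊆ R_big \ R]: a deficient world must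
   keep its only [completion]-successor. *)
Lemma completion_minimal (R R'' : arel Act Atom) :
  models (valS S) (rel_union R R'') (theory S E X) ->
  rel_sub R'' (completion R) -> rel_sub (completion R) R''.
Proof.
  intros HM Hsub a w w' [[Hw [Hnone [phi [Hx Hphi]]]] ->].
  apply models_theoryP in HM as (_ & _ & _ & HX).
  destruct (HX a phi w Hx Hw Hphi) as [v [Hr | Hr'']].
  - exfalso. apply Hnone. eauto.
  - destruct (Hsub a w v Hr'') as [_ ->]. exact Hr''.
Qed.

End Theory.

Theorem lemma3 (Act Atom : Type)
  (S : static_laws Atom) (E : effect_laws Act Atom) (X : exec_laws Act Atom) :
  models (W_big S) (R_big S E) (theory S E X) ->
  forall (W : worlds Atom) (R : arel Act Atom),
    models W R (theory S E X) ->
    exists R' : arel Act Atom,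
      rel_sub R' (rel_diff (R_big S E) R) /\
      models (valS S) (rel_union R R') (theory S E X) /\
      (forall R'' : arel Act Atom,
          rel_sub R'' (rel_diff (R_big S E) R) ->
          models (valS S) (rel_union R R'') (theory S E X) ->
          rel_sub R'' R' -> rel_sub R' R'').
Proof.
  intros Hbig W R HM.
  exists (completion S E X R). split; [|split].
  - exact (completion_sub_diff Hbig (R := R)).
  - exact (completion_models Hbig HM).
  - intros R'' _ HM'' Hsub. exact (completion_minimal HM'' Hsub).
Qed.
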